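(* Let $m$ be a positive integer, $r\geq 1$ and $\mathbf{p}=(p_1,\dots,p_m),\mathbf{q}=(q_1,\dots,q_m)\in[1,\infty]^m$. Suppose that either (a) $q_k\geq p_k$ for $k=1,\dots,m$ and $\frac1r-\left|\frac1{\mathbf{p}}\right|+\left|\frac1{\mathbf{q}}\right|>0$, or (b) $q_k\geq p_k$ for $k=2,\dots,m$, $q_1>p_1$, and $\frac1r-\left|\frac1{\mathbf{p}}\right|+\left|\frac1{\mathbf{q}}\right|\geq 0$. Define $\mathbf{s}=(s_1,\dots,s_m)$ by \[ \frac1{s_k}-\left|\frac1{\mathbf{q}}\right|_{\geq k}=\frac1r-\left|\frac1{\mathbf{p}}\right|_{\geq k},\qquad k=1,\dots,m, \] and assume $\mathbf{s}\in[1,\infty]^m$. Then for all Banach spaces $X_1,\dots,X_m,Y$ over $\mathbb{K}$, \[ \Pi^m_{(r;\mathbf{p})}(X_1,\dots,X_m;Y)\subset\Pi^m_{(\mathbf{s};\mathbf{q})}(X_1,\dots,X_m;Y), \] and the inclusion operator has norm $1$, i.e. $\pi_{(\mathbf{s};\mathbf{q})}(T)\le \pi_{(r;\mathbf{p})}(T)$ for every $T$ in the first space.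
   Context: $\mathbb{K}=\mathbb{R}$ or $\mathbb{C}$; $1/\infty:=0$. For $\mathbf{p}\in[1,\infty]^m$, $\left|\frac1{\mathbf{p}}\right|_{\geq k}:=\frac1{p_k}+\cdots+\frac1{p_m}$ and $\left|\frac1{\mathbf{p}}\right|:=\left|\frac1{\mathbf{p}}\right|_{\geq1}$. For a finite sequence $(x_j)_{j=1}^n$ in a Banach space $X$ and $p\in[1,\infty]$, $\|(x_j)_{j=1}^n\|_{w,p}:=\sup_{\varphi\in B_{X^*}}\|(\varphi(x_j))_{j=1}^n\|_{\ell_p}$. For $\mathbf{r}\in[1,\infty]^m$, $\mathbf{p}\in[1,\infty]^m$, a continuous $m$-linear map $T:X_1\times\cdots\times X_m\to Y$ is multiple $(\mathbf{r};\mathbf{p})$-summing if there is $C>0$ such that for all $n$ and all sequences $(x^{(k)}_j)_{j=1}^n\subset X_k$, \[ \left(\sum_{j_1=1}^n\left(\cdots\left(\sum_{j_m=1}^n\|T(x^{(1)}_{j_1},\dots,x^{(m)}_{j_m})\|^{r_m}\right)^{\frac{r_{m-1}}{r_m}}\cdots\right)^{\frac{r_1}{r_2}}\right)^{\frac1{r_1}}\le C\prod_{k=1}^m\|(x^{(k)}_j)_{j=1}^n\|_{w,p_k}, \] where any sum with exponent $\infty$ is replaced by a supremum. The space of such maps is $\Pi^m_{(\mathbf{r};\mathbf{p})}(X_1,\dots,X_m;Y)$, with norm $\pi_{(\mathbf{r};\mathbf{p})}(T)$ equal to the infimum of such $C$; when $r_1=\cdots=r_m=r$ one writes $(r;\mathbf{p})$.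 *)

From Stdlib Require Import Reals ClassicalEpsilon.
Open Scope R_scope.
Set Implicit Arguments.

Record Scalars := {
  sc :> Type;
  s0 : sc; s1 : sc;
  sadd : sc -> sc -> sc;
  smul : sc -> sc -> sc;
  sopp : sc -> sc;
  sabs : sc -> R }.

Definition RS : Scalars := {| sc := R; s0 := 0; s1 := 1; sadd := Rplus;
  smul := Rmult; sopp := Ropp; sabs := Rabs |}.

Definition Cx := (R * R)%type.
Definition Cadd (z w : Cx) : Cx := (fst z + fst w, snd z + snd w).
Definition Cmul (z w : Cx) : Cx :=
  (fst z * fst w - snd z * snd w, fst z * snd w + snd z * fst w).
Definition Copp (z : Cx) : Cx := (- fst z, - snd z).
Definition Cabs (z : Cx) : R := sqrt (fst z ^ 2 + snd z ^ 2).

Definition CS : Scalars := {| sc := Cx; s0 := (0, 0); s1 := (1, 0); sadd := Cadd;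
  smul := Cmul; sopp := Copp; sabs := Cabs |}.

Definition Kof (b : bool) : Scalars := if b then RS else CS.

Record BanachSpace (K : Scalars) := {
  car :> Type;
  vzero : car;
  vadd : car -> car -> car;
  vopp : car -> car;
  vscal : sc K -> car -> car;
  vnorm : car -> R;
  vadd_assoc : forall x y z, vadd x (vadd y z) = vadd (vadd x y) z;
  vadd_comm : forall x y, vadd x y = vadd y x;
  vadd_0 : forall x, vadd x vzero = x;
  vadd_opp : forall x, vadd x (vopp x) = vzero;
  vscal_assoc : forall a b x, vscal a (vscal b x) = vscal (smul K a b) x;
  vscal_1 : forall x, vscal (s1 K) x = x;
  vscal_distr_v : forall a x y, vscal a (vadd x y) = vadd (vscal a x) (vscal a y);
  vscal_distr_s : forall a b x, vscal (sadd K a b) x = vadd (vscal a x) (vscal b x);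
  vnorm_eq0 : forall x, vnorm x = 0 <-> x = vzero;
  vnorm_tri : forall x y, vnorm (vadd x y) <= vnorm x + vnorm y;
  vnorm_scal : forall a x, vnorm (vscal a x) = sabs K a * vnorm x;
  vcomplete : forall u : nat -> car,
    (forall eps, 0 < eps -> exists N, forall i j, (N <= i)%nat -> (N <= j)%nat ->
        vnorm (vadd (u i) (vopp (u j))) < eps) ->
    exists l, forall eps, 0 < eps -> exists N, forall i, (N <= i)%nat ->
        vnorm (vadd (u i) (vopp l)) < eps }.

Arguments vzero {K} _. Arguments vadd {K} _ _ _. Arguments vopp {K} _ _.
Arguments vscal {K} _ _ _. Arguments vnorm {K} _ _.

Inductive ext := Fin (x : R) | Inf.

Definition ext_valid (p : ext) : Prop :=
  match p with Fin x => 1 <= x | Inf => True end.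

Definition inv (p : ext) : R := match p with Fin x => 1 / x | Inf => 0 end.

Definition ext_le (p q : ext) : Prop :=
  match p, q with
  | Fin a, Fin b => a <= b
  | _, Inf => True
  | Inf, Fin _ => False
  end.

Definition ext_lt (p q : ext) : Prop :=
  match p, q with
  | Fin a, Fin b => a < b
  | Fin _, Inf => True
  | Inf, _ => False
  end.

(** |1/p|_{>= k+1} (0-based index k): sum_{i = k}^{m-1} 1/p_i *)
Fixpoint sum_from (f : nat -> R) (k d : nat) : R :=
  match d with O => 0 | S d' => f k + sum_from f (S k) d' end.
Definition tail_inv (m : nat) (p : nat -> ext) (k : nat) : R :=
  sum_from (fun i => inv (p i)) k (m - k).

Fixpoint sumR (f : nat -> R) (n : nat) : R :=
  match n with O => 0 | S n' => sumR f n' + f n' end.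
Fixpoint prodR (f : nat -> R) (n : nat) : R :=
  match n with O => 1 | S n' => prodR f n' * f n' end.
Fixpoint maxabs (f : nat -> R) (n : nat) : R :=
  match n with O => 0 | S n' => Rmax (maxabs f n') (Rabs (f n')) end.

(** x^y for x >= 0, y > 0, with 0^y = 0 *)
Definition rpow (x y : R) : R := if Req_EM_T x 0 then 0 else Rpower x y.

Definition lpn (p : ext) (n : nat) (f : nat -> R) : R :=
  match p with
  | Inf => maxabs f n
  | Fin a => rpow (sumR (fun j => rpow (Rabs (f j)) a) n) (1 / a)
  end.

Definition Rsup (E : R -> Prop) : R := epsilon (inhabits 0) (fun l => is_lub E l).
Definition Rinf (E : R -> Prop) : R := - Rsup (fun x => E (- x)).

Definition dual_ball {K} (X : BanachSpace K) (phi : X -> sc K) : Prop :=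
  (forall a u v, phi (vadd X (vscal X a u) v) = sadd K (smul K a (phi u)) (phi v)) /\
  (forall x, sabs K (phi x) <= vnorm X x).

Definition wnorm {K} (X : BanachSpace K) (p : ext) (n : nat) (x : nat -> X) : R :=
  Rsup (fun t => exists phi, dual_ball X phi /\ t = lpn p n (fun j => sabs K (phi (x j)))).

(** * Multilinear maps on X_0 x ... x X_{m-1} (indices >= m are ignored) *)
Definition upd {A : nat -> Type} (x : forall i, A i) (k : nat) (u : A k) : forall i, A i :=
  fun i => match PeanoNat.Nat.eq_dec k i with
           | left e => eq_rect k A u i e
           | right _ => x i
           end.

Definition multilinear {K} (m : nat) (X : nat -> BanachSpace K) (Y : BanachSpace K)
  (T : (forall k, X k) -> Y) : Prop :=
  (forall x y : forall k, X k, (forall k, (k < m)%nat -> x k = y k) -> T x = T y) /\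
  (forall k (x : forall k, X k) (a : sc K) (u v : X k), (k < m)%nat ->
     T (upd x k (vadd (X k) (vscal (X k) a u) v)) =
     vadd Y (vscal Y a (T (upd x k u))) (T (upd x k v))).

Definition continuous_ml {K} (m : nat) (X : nat -> BanachSpace K) (Y : BanachSpace K)
  (T : (forall k, X k) -> Y) : Prop :=
  forall (x : forall k, X k) eps, 0 < eps -> exists delta, 0 < delta /\
    forall y : forall k, X k,
      (forall k, (k < m)%nat -> vnorm (X k) (vadd (X k) (y k) (vopp (X k) (x k))) < delta) ->
      vnorm Y (vadd Y (T y) (vopp Y (T x))) < eps.

(** * Mixed norm: l_{r_0} over j_0 of l_{r_1} over j_1 ... of F(j) *)
Fixpoint mixn (r : nat -> ext) (n : nat) (F : (nat -> nat) -> R)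
  (d k : nat) (j : nat -> nat) : R :=
  match d with
  | O => F j
  | S d' => lpn (r k) n (fun t => mixn r n F d' (S k)
              (fun i => if PeanoNat.Nat.eqb i k then t else j i))
  end.

Definition mixed (r : nat -> ext) (n m : nat) (F : (nat -> nat) -> R) : R :=
  mixn r n F m 0 (fun _ => O).

Definition summing_ineq {K} (m : nat) (X : nat -> BanachSpace K) (Y : BanachSpace K)
  (r p : nat -> ext) (T : (forall k, X k) -> Y) (C : R) : Prop :=
  forall (n : nat) (xs : forall k, nat -> X k),
    mixed r n m (fun j => vnorm Y (T (fun k => xs k (j k))))
      <= C * prodR (fun k => wnorm (X k) (p k) n (xs k)) m.

Definition is_summing {K} (m : nat) (X : nat -> BanachSpace K) (Y : BanachSpace K)
  (r p : nat -> ext) (T : (forall k, X k) -> Y) : Prop :=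
  multilinear m X Y T /\ continuous_ml m X Y T /\
  exists C, 0 < C /\ summing_ineq m X Y r p T C.

Definition pi_norm {K} (m : nat) (X : nat -> BanachSpace K) (Y : BanachSpace K)
  (r p : nat -> ext) (T : (forall k, X k) -> Y) : R :=
  Rinf (fun C => 0 < C /\ summing_ineq m X Y r p T C).

From Stdlib Require Import Reals Lra Lia ClassicalEpsilon FunctionalExtensionality.
Open Scope R_scope.

(* Write [1/p_k = 1/t_k + 1/q_k], which is possible with [t_k >= 1] because [p_k <= q_k].
   Peeling the coordinates off from the innermost one and applying the converse of Hölder's
   inequality at each step, the [s]-mixed norm of [(|T(x_j)|)_j] is at most the [r]-mixed norm
   of [lam_1(j_1) ... lam_m(j_m) |T(x_j)|] for weights with [|lam_k|_{t_k} <= 1]: the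
   definition of [s] is exactly what makes the exponents match at each step, and conditions
   (a)/(b) guarantee that [s_2, ..., s_m] are finite.  By multilinearity the weights can be
   moved into the vectors, and by Hölder's inequality [|(lam_k x_k)|_{w,p_k} <= |(x_k)|_{w,q_k}],
   so every constant of the [(r;p)]-summing inequality is one for the [(s;q)]-summing inequality. *)

Lemma one_div_pos x : 0 < x -> 0 < 1 / x.
Proof. intro; apply Rdiv_lt_0_compat; lra. Qed.

Lemma one_div_inj x y : 0 < x -> 0 < y -> 1 / x = 1 / y -> x = y.
Proof. intros hx hy h. replace x with (/ (1 / x)) by (field; lra). rewrite h. field; lra. Qed.

Lemma Rabs_eq_0 x : Rabs x = 0 -> x = 0.
Proof. intro h. destruct (Req_dec x 0) as [|hx]; auto. exfalso; exact (Rabs_no_R0 x hx h). Qed.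

Lemma rpow_0l a : rpow 0 a = 0.
Proof. unfold rpow; destruct (Req_EM_T 0 0); lra. Qed.

Lemma rpow_pos x a : 0 < x -> rpow x a = Rpower x a.
Proof. intro; unfold rpow; destruct (Req_EM_T x 0); lra. Qed.

Lemma rpow_ge0 x a : 0 <= rpow x a.
Proof. unfold rpow; destruct (Req_EM_T x 0). lra. unfold Rpower; left; apply exp_pos. Qed.

Lemma rpow_gt0 x a : 0 < x -> 0 < rpow x a.
Proof. intro; rewrite rpow_pos by lra; unfold Rpower; apply exp_pos. Qed.

Lemma rpow_mul x y a : 0 <= x -> 0 <= y -> rpow (x * y) a = rpow x a * rpow y a.
Proof.
  intros hx hy. destruct (Req_dec x 0). subst; rewrite Rmult_0_l, !rpow_0l; ring.
  destruct (Req_dec y 0). subst; rewrite Rmult_0_r, !rpow_0l; ring.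
  rewrite !rpow_pos by nra. rewrite Rpower_mult_distr; lra.
Qed.

Lemma rpow_rpow x a b : 0 <= x -> rpow (rpow x a) b = rpow x (a * b).
Proof.
  intros hx. destruct (Req_dec x 0). subst; rewrite !rpow_0l; ring.
  rewrite (rpow_pos x a), rpow_pos, Rpower_mult, rpow_pos; try lra.
  unfold Rpower; apply exp_pos.
Qed.

Lemma rpow_1 x : 0 <= x -> rpow x 1 = x.
Proof.
  intros; destruct (Req_dec x 0). subst; apply rpow_0l.
  rewrite rpow_pos by lra; apply Rpower_1; lra.
Qed.

Lemma rpow_1l a : rpow 1 a = 1.
Proof. rewrite rpow_pos by lra. unfold Rpower. rewrite ln_1, Rmult_0_r; apply exp_0. Qed.

Lemma rpow_inv_exp x a : 0 <= x -> 0 < a -> rpow (rpow x a) (1 / a) = x.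
Proof. intros. rewrite rpow_rpow by lra. replace (a * (1 / a)) with 1 by (field; lra). apply rpow_1; lra. Qed.

Lemma rpow_exp_inv x a : 0 <= x -> 0 < a -> rpow (rpow x (1 / a)) a = x.
Proof. intros. rewrite rpow_rpow by lra. replace (1 / a * a) with 1 by (field; lra). apply rpow_1; lra. Qed.

Lemma rpow_plus x a b : 0 <= x -> rpow x (a + b) = rpow x a * rpow x b.
Proof.
  intros; destruct (Req_dec x 0). subst; rewrite !rpow_0l; ring.
  rewrite !rpow_pos by lra; apply Rpower_plus.
Qed.

Lemma rpow_le x y a : 0 <= x <= y -> 0 <= a -> rpow x a <= rpow y a.
Proof.
  intros hx ha. destruct (Req_dec x 0). subst; rewrite rpow_0l; apply rpow_ge0.
  rewrite !rpow_pos by lra. apply Rle_Rpower_l; lra.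
Qed.

Lemma rpow_le_reg x y a : 0 <= x -> 0 <= y -> 0 < a -> rpow x a <= rpow y a -> x <= y.
Proof.
  intros hx hy ha h. destruct (Rle_dec x y); auto.
  assert (rpow y a < rpow x a); [|lra].
  destruct (Req_dec y 0). { subst. rewrite rpow_0l. apply rpow_gt0; lra. }
  rewrite !rpow_pos by lra. apply Rlt_Rpower_l; lra.
Qed.

Lemma rpow_eq0 x a : 0 <= x -> rpow x a = 0 -> x = 0.
Proof. intros hx h. destruct (Req_dec x 0); auto. pose proof (rpow_gt0 x a); lra. Qed.

Lemma rpow_div x y a : 0 <= x -> 0 < y -> rpow (x / y) a = rpow x a / rpow y a.
Proof.
  intros. unfold Rdiv. rewrite rpow_mul by (try apply Rlt_le, Rinv_0_lt_compat; lra).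
  rewrite (rpow_pos (/ y)), (rpow_pos y) by (try apply Rinv_0_lt_compat; lra).
  unfold Rpower. rewrite ln_Rinv, <- exp_Ropp by lra. f_equal. f_equal; ring.
Qed.

Lemma rpow_le_exp_le1 x a b : 0 <= x <= 1 -> 0 < a <= b -> rpow x b <= rpow x a.
Proof.
  intros hx hab. destruct (Req_dec x 0). subst; rewrite !rpow_0l; lra.
  rewrite !rpow_pos by lra. unfold Rpower.
  assert (ln x <= 0).
  { destruct (Req_dec x 1). subst; rewrite ln_1; lra. rewrite <- ln_1; left; apply ln_increasing; lra. }
  destruct (Req_dec ((b - a) * ln x) 0). { replace (b * ln x) with (a * ln x) by nra; lra. }
  left; apply exp_increasing. nra.
Qed.

Lemma rpow_le1 x a : 0 <= x <= 1 -> 0 <= a -> rpow x a <= 1.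
Proof. intros. rewrite <- (rpow_1l a). apply rpow_le; lra. Qed.

Lemma weighted_amgm x y th : 0 <= x -> 0 <= y -> 0 < th < 1 ->
  rpow x th * rpow y (1 - th) <= th * x + (1 - th) * y.
Proof.
  intros hx hy hth. destruct (Req_dec x 0). subst; rewrite rpow_0l; nra.
  destruct (Req_dec y 0). subst; rewrite rpow_0l; nra.
  rewrite !rpow_pos by lra. unfold Rpower. rewrite <- exp_plus.
  set (M := th * x + (1 - th) * y). assert (hM : 0 < M) by (unfold M; nra).
  (* concavity of [ln]: [ln z <= z - 1] at [z = x / M] and [z = y / M], weighted by [th], [1 - th] *)
  assert (tangent : forall z, 0 < z -> ln (z / M) <= z / M - 1).
  { intros z hz. pose proof (exp_ineq1_le (ln (z / M))) as h.
    rewrite exp_ln in h by (apply Rdiv_lt_0_compat; lra). lra. }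
  pose proof (tangent x ltac:(lra)) as hlx. pose proof (tangent y ltac:(lra)) as hly.
  unfold Rdiv in hlx, hly. rewrite ln_mult, ln_Rinv in hlx, hly by (try apply Rinv_0_lt_compat; lra).
  assert (th * (x * / M - 1) + (1 - th) * (y * / M - 1) = 0) by (unfold M in *; field; lra).
  assert (hle : th * ln x + (1 - th) * ln y <= ln M) by nra.
  rewrite <- (exp_ln M) by lra.
  destruct (Rle_lt_or_eq_dec _ _ hle) as [hlt|heq]; [left; apply exp_increasing, hlt | rewrite heq; lra].
Qed.

Lemma sumR_ext f g n : (forall j, (j < n)%nat -> f j = g j) -> sumR f n = sumR g n.
Proof. induction n; simpl; intros hf; auto. rewrite IHn, hf by (intros; try apply hf; lia); auto. Qed.

Lemma sumR_le f g n : (forall j, (j < n)%nat -> f j <= g j) -> sumR f n <= sumR g n.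
Proof.
  induction n; simpl; intros hf. lra.
  pose proof (hf n ltac:(lia)). pose proof (IHn ltac:(intros; apply hf; lia)). lra.
Qed.

Lemma sumR_0 n : sumR (fun _ => 0) n = 0.
Proof. induction n; simpl; auto. rewrite IHn; ring. Qed.

Lemma sumR_ge0 f n : (forall j, (j < n)%nat -> 0 <= f j) -> 0 <= sumR f n.
Proof. intros. rewrite <- (sumR_0 n). apply sumR_le; auto. Qed.

Lemma sumR_scal c f n : sumR (fun j => c * f j) n = c * sumR f n.
Proof. induction n; simpl. ring. rewrite IHn; ring. Qed.

Lemma sumR_plus f g n : sumR (fun j => f j + g j) n = sumR f n + sumR g n.
Proof. induction n; simpl. ring. rewrite IHn; ring. Qed.

Lemma sumR_swap (f : nat -> nat -> R) m n :
  sumR (fun i => sumR (fun j => f i j) n) m = sumR (fun j => sumR (fun i => f i j) m) n.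
Proof.
  induction m; simpl. { symmetry; apply sumR_0. }
  rewrite IHm, <- sumR_plus. reflexivity.
Qed.

Lemma sumR_ge_term f n j :
  (forall j, (j < n)%nat -> 0 <= f j) -> (j < n)%nat -> f j <= sumR f n.
Proof.
  induction n; simpl; intros hf hj. lia.
  assert (0 <= sumR f n) by (apply sumR_ge0; intros; apply hf; lia).
  destruct (Nat.eq_dec j n). subst; lra.
  assert (0 <= f n) by (apply hf; lia). pose proof (IHn ltac:(intros; apply hf; lia) ltac:(lia)). lra.
Qed.

Lemma sumR_eq0 f n : (forall j, (j < n)%nat -> 0 <= f j) -> sumR f n = 0 ->
  forall j, (j < n)%nat -> f j = 0.
Proof.
  intros hf h j hj. pose proof (sumR_ge_term f n j hf hj). pose proof (hf j hj). lra.
Qed.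

Lemma sumR_indicator c j0 n : (j0 < n)%nat ->
  sumR (fun j => if Nat.eqb j j0 then c else 0) n = c.
Proof.
  induction n; simpl; intros. lia.
  destruct (Nat.eqb_spec n j0).
  - subst j0. rewrite (sumR_ext _ (fun _ => 0)), sumR_0. ring.
    intros. destruct (Nat.eqb_spec j n); [lia|auto].
  - rewrite IHn by lia. ring.
Qed.

Lemma prodR_ext f g d : (forall i, (i < d)%nat -> f i = g i) -> prodR f d = prodR g d.
Proof. induction d; simpl; intros hf; auto. rewrite IHd, hf by (intros; try apply hf; lia); auto. Qed.

Lemma prodR_ge0 f d : (forall i, (i < d)%nat -> 0 <= f i) -> 0 <= prodR f d.
Proof.
  induction d; simpl; intros hf. lra.
  apply Rmult_le_pos. apply IHd; intros; apply hf; lia. apply hf; lia.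
Qed.

Lemma prodR_le f g d : (forall i, (i < d)%nat -> 0 <= f i <= g i) -> prodR f d <= prodR g d.
Proof.
  induction d; simpl; intros hf. lra.
  apply Rmult_le_compat; try apply hf; try lia.
  apply prodR_ge0; intros; apply hf; lia. apply IHd; intros; apply hf; lia.
Qed.

Lemma maxabs_ge0 f n : 0 <= maxabs f n.
Proof. induction n; simpl. lra. apply Rle_trans with (maxabs f n); auto. apply Rmax_l. Qed.

Lemma maxabs_ge f n j : (j < n)%nat -> Rabs (f j) <= maxabs f n.
Proof.
  induction n; simpl; intros. lia. destruct (Nat.eq_dec j n). subst; apply Rmax_r.
  apply Rle_trans with (maxabs f n). apply IHn; lia. apply Rmax_l.
Qed.

Lemma maxabs_le f n M : 0 <= M -> (forall j, (j < n)%nat -> Rabs (f j) <= M) -> maxabs f n <= M.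
Proof. induction n; simpl; intros hM hf. auto. apply Rmax_lub. apply IHn; auto. apply hf; lia. Qed.

Lemma maxabs_attained f n : (0 < n)%nat -> exists j, (j < n)%nat /\ maxabs f n = Rabs (f j).
Proof.
  induction n; simpl; intros. lia. destruct n.
  - exists 0%nat; split; auto. simpl. apply Rmax_right. apply Rabs_pos.
  - destruct IHn as [j [hj e]]. lia. unfold Rmax at 1.
    destruct (Rle_dec (maxabs f (S n)) (Rabs (f (S n)))).
    + exists (S n); split; auto.
    + exists j; split; auto.
Qed.

Lemma maxabs_ext f g n : (forall j, (j < n)%nat -> Rabs (f j) = Rabs (g j)) ->
  maxabs f n = maxabs g n.
Proof. induction n; simpl; intros hf; auto. rewrite IHn, hf by (intros; try apply hf; lia); auto. Qed.

Lemma inv_ge0 p : ext_valid p -> 0 <= inv p.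
Proof. destruct p; simpl; intros; [apply Rlt_le, one_div_pos; lra | lra]. Qed.

Lemma ext_le_of_inv_le x q : 0 < x -> ext_valid q -> inv q <= 1 / x -> ext_le (Fin x) q.
Proof.
  destruct q as [y|]; simpl; auto. intros hx hy h.
  destruct (Rle_dec x y) as [|hlt]; auto. apply Rnot_le_lt in hlt.
  assert (1 / x < 1 / y) by (unfold Rdiv; rewrite !Rmult_1_l; apply Rinv_lt_contravar; nra). lra.
Qed.

Lemma inv_inj p q : ext_valid p -> ext_valid q -> inv p = inv q -> p = q.
Proof.
  intros hp hq e. destruct p as [a|]; destruct q as [c|]; simpl in *.
  - f_equal. apply one_div_inj; auto; lra.
  - pose proof (one_div_pos a); lra.
  - pose proof (one_div_pos c); lra.
  - auto.
Qed.

Lemma lpn_ge0 p n f : 0 <= lpn p n f.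
Proof. destruct p; simpl. apply rpow_ge0. apply maxabs_ge0. Qed.

Lemma lpn_ext p n f g : (forall j, (j < n)%nat -> Rabs (f j) = Rabs (g j)) ->
  lpn p n f = lpn p n g.
Proof.
  intros hf. destruct p; simpl.
  - f_equal. apply sumR_ext; intros; rewrite hf; auto.
  - apply maxabs_ext; auto.
Qed.

Lemma lpn_le p n f g : ext_valid p -> (forall j, (j < n)%nat -> Rabs (f j) <= Rabs (g j)) ->
  lpn p n f <= lpn p n g.
Proof.
  intros hp hf. destruct p; simpl in *.
  - apply rpow_le. 2: apply Rlt_le, one_div_pos; lra.
    split. apply sumR_ge0; intros; apply rpow_ge0.
    apply sumR_le; intros. apply rpow_le. split. apply Rabs_pos. apply hf; auto. lra.
  - apply maxabs_le. apply maxabs_ge0. intros.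
    apply Rle_trans with (Rabs (g j)). apply hf; auto. apply maxabs_ge; auto.
Qed.

Lemma lpn_zero p n f : (forall j, (j < n)%nat -> f j = 0) -> lpn p n f = 0.
Proof.
  intros hf. rewrite (lpn_ext _ _ _ (fun _ => 0)) by (intros; rewrite hf; auto). destruct p; simpl.
  - rewrite (sumR_ext _ (fun _ => 0)), sumR_0 by (intros; rewrite Rabs_R0, rpow_0l; auto).
    apply rpow_0l.
  - apply Rle_antisym. apply maxabs_le. lra. intros; rewrite Rabs_R0; lra. apply maxabs_ge0.
Qed.

Lemma lpn_Fin_pow a n f : 0 < a ->
  rpow (lpn (Fin a) n f) a = sumR (fun j => rpow (Rabs (f j)) a) n.
Proof. intros. apply rpow_exp_inv; auto. apply sumR_ge0; intros; apply rpow_ge0. Qed.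

Lemma lpn_scal p n c f : ext_valid p -> lpn p n (fun j => c * f j) = Rabs c * lpn p n f.
Proof.
  intros hp. destruct p; simpl in *.
  - rewrite (sumR_ext _ (fun j => rpow (Rabs c) x * rpow (Rabs (f j)) x)).
    2:{ intros. rewrite Rabs_mult, rpow_mul; auto; apply Rabs_pos. }
    rewrite sumR_scal, rpow_mul, rpow_inv_exp; try apply Rabs_pos; try lra.
    apply rpow_ge0. apply sumR_ge0; intros; apply rpow_ge0.
  - induction n; simpl. ring. rewrite IHn, Rabs_mult, RmaxRmult; auto. apply Rabs_pos.
Qed.

Lemma lpn_eq0 p n f : ext_valid p -> lpn p n f = 0 -> forall j, (j < n)%nat -> f j = 0.
Proof.
  intros hp h j hj. apply Rabs_eq_0. destruct p; simpl in *.
  - apply rpow_eq0 in h. 2:{ apply sumR_ge0; intros; apply rpow_ge0. }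
    apply sumR_eq0 with (j := j) in h; auto. apply rpow_eq0 in h; auto. apply Rabs_pos.
    intros; apply rpow_ge0.
  - pose proof (maxabs_ge f n j hj). pose proof (Rabs_pos (f j)). lra.
Qed.

(* Normalise to [|f|_a = 1]; then every [|f j| <= 1], so raising to the larger power [b] shrinks. *)
Lemma lpn_le_exp a b n f : 1 <= a <= b -> lpn (Fin b) n f <= lpn (Fin a) n f.
Proof.
  intros hab. set (N := lpn (Fin a) n f).
  destruct (Req_dec N 0).
  { rewrite lpn_zero. apply lpn_ge0. apply lpn_eq0 with (p := Fin a); simpl; auto; lra. }
  assert (hN : 0 < N) by (pose proof (lpn_ge0 (Fin a) n f); unfold N in *; lra).
  set (g := fun j => / N * f j).
  rewrite (lpn_ext _ n f (fun j => N * g j)) by (intros; unfold g; f_equal; field; lra).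
  rewrite lpn_scal, Rabs_pos_eq by (simpl; lra).
  assert (hs : sumR (fun j => rpow (Rabs (g j)) a) n = 1).
  { rewrite <- lpn_Fin_pow by lra. unfold g. rewrite lpn_scal by (simpl; lra).
    rewrite Rabs_pos_eq by (apply Rlt_le, Rinv_0_lt_compat; lra). fold N.
    rewrite Rinv_l by lra. apply rpow_1l. }
  assert (hgj : forall j, (j < n)%nat -> Rabs (g j) <= 1).
  { intros. apply rpow_le_reg with a; try apply Rabs_pos; try lra. rewrite rpow_1l, <- hs.
    apply sumR_ge_term with (f := fun j => rpow (Rabs (g j)) a); auto. intros; apply rpow_ge0. }
  assert (lpn (Fin b) n g <= 1).
  { simpl. apply rpow_le1. 2: apply Rlt_le, one_div_pos; lra.
    split. apply sumR_ge0; intros; apply rpow_ge0.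
    rewrite <- hs. apply sumR_le. intros. apply rpow_le_exp_le1. split. apply Rabs_pos. auto. lra. }
  nra.
Qed.

(** * Hölder's inequality and its converse *)

Lemma rpow_split_scale x A c th : 0 <= x -> 0 < A ->
  rpow x (c * th) = rpow A th * rpow (rpow x c / A) th.
Proof.
  intros hx hA. rewrite rpow_div, rpow_rpow by (auto; apply rpow_ge0).
  field. apply Rgt_not_eq, rpow_gt0; lra.
Qed.

Lemma lpn_mul_le_maxabs p n f g : ext_valid p ->
  lpn p n (fun j => f j * g j) <= maxabs f n * lpn p n g.
Proof.
  intros hp. rewrite <- (Rabs_pos_eq (maxabs f n)) by apply maxabs_ge0.
  rewrite <- lpn_scal by auto. apply lpn_le; auto. intros j hj.
  rewrite !Rabs_mult. apply Rmult_le_compat_r. apply Rabs_pos.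
  rewrite (Rabs_pos_eq (maxabs f n)) by apply maxabs_ge0. apply maxabs_ge; auto.
Qed.

Lemma young_normalized x y A B T Q th : 0 <= x -> 0 <= y -> 0 < A -> 0 < B -> 0 < th < 1 ->
  rpow x (T * th) * rpow y (Q * (1 - th)) <=
  rpow A th * rpow B (1 - th) * (th * (rpow x T / A) + (1 - th) * (rpow y Q / B)).
Proof.
  intros hx hy hA hB hth. rewrite (rpow_split_scale _ A), (rpow_split_scale _ B) by auto.
  assert (hx' : 0 <= rpow x T / A)
    by (apply Rmult_le_pos; [apply rpow_ge0 | apply Rlt_le, Rinv_0_lt_compat; lra]).
  assert (hy' : 0 <= rpow y Q / B)
    by (apply Rmult_le_pos; [apply rpow_ge0 | apply Rlt_le, Rinv_0_lt_compat; lra]).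
  pose proof (weighted_amgm _ _ th hx' hy' hth).
  pose proof (Rmult_le_pos _ _ (rpow_ge0 A th) (rpow_ge0 B (1 - th))). nra.
Qed.

Lemma holder_Fin P T Q n f g : 0 < P -> 0 < T -> 0 < Q -> 1 / P = 1 / T + 1 / Q ->
  lpn (Fin P) n (fun j => f j * g j) <= lpn (Fin T) n f * lpn (Fin Q) n g.
Proof.
  intros hP hT hQ e.
  set (A := sumR (fun j => rpow (Rabs (f j)) T) n).
  set (B := sumR (fun j => rpow (Rabs (g j)) Q) n).
  assert (hR : 0 <= lpn (Fin T) n f * lpn (Fin Q) n g) by (apply Rmult_le_pos; apply lpn_ge0).
  assert (vanish : forall (h : nat -> R) a, sumR (fun j => rpow (Rabs (h j)) a) n = 0 ->
            forall j, (j < n)%nat -> h j = 0).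
  { intros h a h0 j hj. apply sumR_eq0 with (j := j) in h0; auto; [|intros; apply rpow_ge0].
    apply Rabs_eq_0, rpow_eq0 with a; auto. apply Rabs_pos. }
  destruct (Req_dec A 0) as [A0|A0].
  { rewrite lpn_zero; auto. intros j hj. rewrite (vanish f T A0 j hj). ring. }
  destruct (Req_dec B 0) as [B0|B0].
  { rewrite lpn_zero; auto. intros j hj. rewrite (vanish g Q B0 j hj). ring. }
  assert (hA : 0 < A) by (assert (0 <= A) by (apply sumR_ge0; intros; apply rpow_ge0); lra).
  assert (hB : 0 < B) by (assert (0 <= B) by (apply sumR_ge0; intros; apply rpow_ge0); lra).
  assert (e1 : T * Q = P * Q + P * T).
  { apply Rmult_eq_reg_l with (1 / P). 2: apply Rgt_not_eq, one_div_pos; lra.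
    rewrite e at 1. field; lra. }
  set (th := P / T).
  assert (hth1 : 1 - th = P / Q).
  { unfold th. apply Rmult_eq_reg_r with (T * Q). 2: nra. field_simplify; lra. }
  assert (hth : 0 < th < 1).
  { split. apply Rdiv_lt_0_compat; lra. assert (0 < P / Q) by (apply Rdiv_lt_0_compat; lra). lra. }
  assert (pointwise : forall j, rpow (Rabs (f j * g j)) P <= rpow A th * rpow B (1 - th) *
       (th * (rpow (Rabs (f j)) T / A) + (1 - th) * (rpow (Rabs (g j)) Q / B))).
  { intro j. rewrite Rabs_mult, rpow_mul by apply Rabs_pos.
    replace P with (T * th) at 1 by (unfold th; field; lra).
    replace P with (Q * (1 - th)) by (rewrite hth1; field; lra).
    apply young_normalized; auto; apply Rabs_pos. }
  assert (hS : sumR (fun j => rpow (Rabs (f j * g j)) P) n <= rpow A th * rpow B (1 - th)).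
  { eapply Rle_trans. apply sumR_le. intros; apply pointwise.
    unfold Rdiv. rewrite sumR_scal, sumR_plus, !sumR_scal.
    rewrite (sumR_ext (fun j => rpow (Rabs (f j)) T * / A) (fun j => / A * rpow (Rabs (f j)) T)),
            (sumR_ext (fun j => rpow (Rabs (g j)) Q * / B) (fun j => / B * rpow (Rabs (g j)) Q))
      by (intros; ring).
    rewrite !sumR_scal. fold A B. right. field; lra. }
  simpl. fold A B. eapply Rle_trans.
  { apply rpow_le. split. apply sumR_ge0; intros; apply rpow_ge0. apply hS.
    apply Rlt_le, one_div_pos; lra. }
  rewrite rpow_mul, !rpow_rpow by (try apply rpow_ge0; lra). right. f_equal; f_equal.
  - unfold th; field; lra.
  - rewrite hth1; field; lra.
Qed.

Lemma holder p t q n f g : ext_valid p -> ext_valid t -> ext_valid q ->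
  inv p = inv t + inv q ->
  lpn p n (fun j => f j * g j) <= lpn t n f * lpn q n g.
Proof.
  intros hp ht hq e. destruct t as [T|]; [destruct q as [Q|]|].
  - destruct p as [P|]; simpl in *.
    + apply holder_Fin; auto; lra.
    + pose proof (one_div_pos T). pose proof (one_div_pos Q). lra.
  - rewrite Rplus_0_r in e. apply inv_inj in e; auto. subst p.
    rewrite (lpn_ext _ _ _ (fun j => g j * f j)) by (intros; rewrite Rmult_comm; auto).
    simpl (lpn Inf n g). rewrite Rmult_comm. apply lpn_mul_le_maxabs; auto.
  - rewrite Rplus_0_l in e. apply inv_inj in e; auto. subst p.
    apply lpn_mul_le_maxabs; auto.
Qed.

(* The extremal weights are [lam j = (b j / |b|_S)^(S/T)]. *)
Lemma reverse_holder_Fin r S T n b : 1 <= r -> 1 <= S -> 1 <= T -> 1 / S = 1 / r - 1 / T ->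
  (forall j, 0 <= b j) ->
  exists lam : nat -> R, (forall j, 0 <= lam j) /\ lpn (Fin T) n lam <= 1 /\
    lpn (Fin S) n b <= lpn (Fin r) n (fun j => lam j * b j).
Proof.
  intros hr hS hT e hb. set (B := lpn (Fin S) n b).
  destruct (Req_dec B 0) as [B0|B0].
  { exists (fun _ => 0). split; [intros; lra|]. rewrite lpn_zero; auto. split; [lra|].
    rewrite B0. apply lpn_ge0. }
  assert (hB : 0 < B) by (pose proof (lpn_ge0 (Fin S) n b); unfold B in *; lra).
  assert (e1 : S * T = r * T + r * S).
  { apply Rmult_eq_reg_l with (1 / r). 2: apply Rgt_not_eq, one_div_pos; lra.
    replace (1 / r) with (1 / S + 1 / T) at 1 by lra. field; lra. }
  assert (hnb : forall j, 0 <= b j / B) by (intro j; apply Rmult_le_pos; auto;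
                                            apply Rlt_le, Rinv_0_lt_compat; lra).
  assert (hsum : sumR (fun j => rpow (b j / B) S) n = 1).
  { rewrite (sumR_ext _ (fun j => / rpow B S * rpow (Rabs (b j)) S)).
    - rewrite sumR_scal, <- lpn_Fin_pow by lra. fold B.
      field. apply Rgt_not_eq, rpow_gt0; lra.
    - intros. rewrite rpow_div, Rabs_pos_eq by (auto; lra). unfold Rdiv; ring. }
  exists (fun j => rpow (b j / B) (S / T)). split; [intros; apply rpow_ge0|split].
  - simpl. rewrite (sumR_ext _ (fun j => rpow (b j / B) S)), hsum, rpow_1l; [lra|].
    intros. rewrite Rabs_pos_eq, rpow_rpow by (auto; apply rpow_ge0). f_equal. field; lra.
  - (* [lam j * b j = B * (b j / B)^(S / r)] *)
    right. simpl. rewrite (sumR_ext _ (fun j => rpow B r * rpow (b j / B) S)).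
    + rewrite sumR_scal, hsum, Rmult_1_r, rpow_inv_exp; lra.
    + intros j _.
      replace (rpow (b j / B) (S / T) * b j) with (B * (rpow (b j / B) (S / T) * (b j / B)))
        by (field; lra).
      rewrite Rabs_pos_eq by (apply Rmult_le_pos; [lra|apply Rmult_le_pos; auto; apply rpow_ge0]).
      rewrite rpow_mul, (rpow_mul _ (b j / B)), rpow_rpow, <- rpow_plus
        by (auto; try lra; try apply rpow_ge0; apply Rmult_le_pos; auto; apply rpow_ge0).
      do 2 f_equal. apply Rmult_eq_reg_r with T; [|lra]. field_simplify; lra.
Qed.

Lemma lpn_reverse_holder r t s n b : 1 <= r -> ext_valid t -> ext_valid s ->
  inv s = 1 / r - inv t -> (forall j, 0 <= b j) ->
  exists lam : nat -> R, (forall j, 0 <= lam j) /\ lpn t n lam <= 1 /\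
    lpn s n b <= lpn (Fin r) n (fun j => lam j * b j).
Proof.
  intros hr ht hs e hb. destruct t as [T|]; [destruct s as [S|]|]; simpl in ht, hs, e.
  - apply reverse_holder_Fin; auto.
  - (* [s = oo]: put all the weight on a coordinate where [b] is maximal *)
    assert (T = r) by (apply one_div_inj; lra). subst T.
    destruct n as [|n].
    { exists (fun _ => 0). split; [intros; lra|]. rewrite lpn_zero by auto. split; [lra|].
      simpl. rewrite rpow_0l. lra. }
    destruct (maxabs_attained b (S n)) as [js [hjs ej]]; [lia|].
    set (delta := fun j => if Nat.eqb j js then 1 else 0).
    assert (hd : forall c, (fun j => rpow (Rabs (delta j * c j)) r) =
                           (fun j => if Nat.eqb j js then rpow (Rabs (c js)) r else 0)).
    { intros c. apply functional_extensionality; intro j. unfold delta.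
      destruct (Nat.eqb_spec j js); [subst; rewrite Rmult_1_l | rewrite Rmult_0_l, Rabs_R0, rpow_0l];
      auto. }
    exists delta. split; [intros; unfold delta; destruct (Nat.eqb j js); lra|split].
    + rewrite (lpn_ext _ _ _ (fun j => delta j * 1)) by (intros; rewrite Rmult_1_r; auto).
      unfold lpn. rewrite hd, sumR_indicator by auto. rewrite Rabs_R1, !rpow_1l. lra.
    + unfold lpn. rewrite ej, hd, sumR_indicator, rpow_inv_exp by (auto; try apply Rabs_pos; lra). lra.
  - assert (s = Fin r) by (apply inv_inj; simpl; auto; lra). subst s.
    exists (fun _ => 1). split; [intros; lra|split].
    + simpl. apply maxabs_le; [lra|]. intros; rewrite Rabs_R1; lra.
    + right. apply lpn_ext. intros; rewrite Rmult_1_l; auto.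
Qed.

(** * Mixed norms *)

Definition setj (j : nat -> nat) (k t : nat) : nat -> nat :=
  fun i => if Nat.eqb i k then t else j i.

Lemma setj_comm j a b x y : a <> b -> setj (setj j a x) b y = setj (setj j b y) a x.
Proof.
  intros. apply functional_extensionality; intro i. unfold setj.
  destruct (Nat.eqb_spec i b); destruct (Nat.eqb_spec i a); auto. lia.
Qed.

Lemma mixn_S r n F d k j :
  mixn r n F (S d) k j = lpn (r k) n (fun t => mixn r n F d (S k) (setj j k t)).
Proof. reflexivity. Qed.

Lemma mixn_ge0 r n F d k j : (forall j, 0 <= F j) -> 0 <= mixn r n F d k j.
Proof. destruct d; simpl; intros; auto. apply lpn_ge0. Qed.

Lemma mixn_ext r n F1 F2 d : forall k j,
  (forall j', (forall i, (i < k \/ k + d <= i)%nat -> j' i = j i) -> F1 j' = F2 j') ->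
  mixn r n F1 d k j = mixn r n F2 d k j.
Proof.
  induction d; simpl; intros k j hF. { apply hF; auto. }
  f_equal. apply functional_extensionality; intro t. apply IHd.
  intros j' hj. apply hF. intros i hi. rewrite hj by lia.
  destruct (Nat.eqb_spec i k); auto; lia.
Qed.

Lemma mixn_scal r n F c d : forall k j, (forall i, ext_valid (r i)) -> 0 <= c ->
  mixn r n (fun j => c * F j) d k j = c * mixn r n F d k j.
Proof.
  induction d; simpl; intros k j hr hc. { auto. }
  rewrite (lpn_ext _ _ _ (fun t => c * mixn r n F d (S k) (setj j k t)))
    by (intros; unfold setj; rewrite IHd; auto).
  rewrite lpn_scal, Rabs_pos_eq; auto.
Qed.

Lemma mixn_le_exp a b n F d : forall k j, 1 <= a <= b -> (forall j, 0 <= F j) ->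
  mixn (fun _ => Fin b) n F d k j <= mixn (fun _ => Fin a) n F d k j.
Proof.
  induction d; intros k j hab hF; cbn [mixn]. { lra. }
  eapply Rle_trans. 2: apply lpn_le_exp; eauto.
  apply lpn_le; [simpl; lra|]. intros t ht.
  rewrite !Rabs_pos_eq by (apply mixn_ge0; auto). apply IHd; auto.
Qed.

Lemma mixn_S_last r n F d : forall k j, mixn r n F (S d) k j =
  mixn r n (fun j' => lpn (r (k + d)%nat) n (fun t => F (setj j' (k + d) t))) d k j.
Proof.
  induction d; intros k j.
  - simpl. rewrite Nat.add_0_r. reflexivity.
  - rewrite mixn_S, (mixn_S r n _ d). f_equal. apply functional_extensionality; intro t.
    rewrite IHd. replace (S k + d)%nat with (k + S d)%nat by lia. reflexivity.
Qed.

(** For a constant exponent [rho], the mixed norm is the [rho]-th root of an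
    iterated sum [flat], and iterated sums can be taken in any order. *)

Fixpoint flat (n : nat) (G : (nat -> nat) -> R) (d k : nat) (j : nat -> nat) : R :=
  match d with
  | O => G j
  | S d' => sumR (fun t => flat n G d' (S k) (setj j k t)) n
  end.

Lemma flat_ge0 n G d : forall k j, (forall j, 0 <= G j) -> 0 <= flat n G d k j.
Proof. induction d; simpl; intros; auto. apply sumR_ge0; intros; apply IHd; auto. Qed.

Lemma flat_S_last n G d : forall k j,
  flat n G (S d) k j = sumR (fun t => flat n G d k (setj j (k + d) t)) n.
Proof.
  induction d; intros k j.
  - simpl. rewrite Nat.add_0_r. reflexivity.
  - change (flat n G (S (S d)) k j) with (sumR (fun t0 => flat n G (S d) (S k) (setj j k t0)) n).
    rewrite (sumR_ext _ (fun t0 => sumR (fun t =>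
               flat n G d (S k) (setj (setj j k t0) (S k + d) t)) n)) by (intros; apply IHd).
    rewrite sumR_swap. apply sumR_ext. intros t _. simpl. apply sumR_ext. intros t0 _.
    rewrite setj_comm by lia. replace (k + S d)%nat with (S (k + d)) by lia. reflexivity.
Qed.

Lemma mixn_const_flat rho n G d : forall k j, (forall j, 0 <= G j) -> 1 <= rho ->
  mixn (fun _ => Fin rho) n G d k j = rpow (flat n (fun j => rpow (G j) rho) d k j) (1 / rho).
Proof.
  induction d; simpl; intros k j hG hr.
  - rewrite rpow_inv_exp; auto; lra.
  - f_equal. apply sumR_ext; intros t _. rewrite IHd by auto.
    rewrite Rabs_pos_eq by apply rpow_ge0.
    rewrite rpow_exp_inv; [auto | | lra]. apply flat_ge0; intros; apply rpow_ge0.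
Qed.

Lemma mixn_const_S_first rho n G d j0 : (forall j, 0 <= G j) -> 1 <= rho ->
  mixn (fun _ => Fin rho) n G (S d) 0 j0 =
  lpn (Fin rho) n (fun t => mixn (fun _ => Fin rho) n G d 0 (setj j0 d t)).
Proof.
  intros hG hr. rewrite mixn_const_flat, flat_S_last by auto. simpl lpn. f_equal.
  apply sumR_ext; intros t _. rewrite mixn_const_flat, Rabs_pos_eq by (auto; apply rpow_ge0).
  rewrite rpow_exp_inv; [auto | | lra]. apply flat_ge0; intros; apply rpow_ge0.
Qed.

Lemma mixn_const_S_first_le_exp rho S' n G d j0 : 1 <= rho <= S' -> (forall j, 0 <= G j) ->
  mixn (fun _ => Fin S') n G (S d) 0 j0 <=
  lpn (Fin S') n (fun x => mixn (fun _ => Fin rho) n G d 0 (setj j0 d x)).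
Proof.
  intros hr hG. rewrite mixn_const_S_first by (auto; lra).
  apply lpn_le; [simpl; lra|]. intros x _.
  rewrite !Rabs_pos_eq by (apply mixn_ge0; auto). apply mixn_le_exp; auto.
Qed.

Lemma mixn_S_last_weighted r n W F d j0 :
  ext_valid (r d) -> (forall j, 0 <= W j) -> (forall j x, W (setj j d x) = W j) ->
  mixn r n (fun j => W j * F j) (S d) 0 j0 =
  mixn r n (fun j => W j * lpn (r d) n (fun x => F (setj j d x))) d 0 j0.
Proof.
  intros hr hW hWx. rewrite mixn_S_last. f_equal. apply functional_extensionality; intro j'.
  rewrite <- (Rabs_pos_eq (W j')), <- lpn_scal by auto.
  apply lpn_ext. intros x _. rewrite hWx. reflexivity.
Qed.

Lemma mixn_const_S_first_weighted rho n c G d j0 :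
  1 <= rho -> (forall j, 0 <= G j) -> (forall x, 0 <= c x) ->
  mixn (fun _ => Fin rho) n (fun j => c (j d) * G j) (S d) 0 j0 =
  lpn (Fin rho) n (fun x => c x * mixn (fun _ => Fin rho) n G d 0 (setj j0 d x)).
Proof.
  intros hr hG hc. rewrite mixn_const_S_first by (auto; intros; apply Rmult_le_pos; auto).
  apply lpn_ext. intros x _. f_equal.
  rewrite <- mixn_scal by (auto; intros; simpl; lra).
  apply mixn_ext. intros j' hj'. rewrite hj' by lia. unfold setj. rewrite Nat.eqb_refl. auto.
Qed.

Lemma sum_from_snoc f i c : sum_from f i (S c) = sum_from f i c + f (i + c)%nat.
Proof.
  revert i; induction c; intros; simpl. { rewrite Nat.add_0_r; ring. }
  simpl in IHc. rewrite IHc. replace (S i + c)%nat with (i + S c)%nat by lia. ring.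
Qed.

Lemma mixn_le_weighted_1 rho t s n F j0 :
  1 <= rho -> ext_valid (t 0%nat) -> ext_valid (s 0%nat) -> inv (s 0%nat) = 1 / rho - inv (t 0%nat) ->
  (forall j, 0 <= F j) ->
  exists lam : nat -> R, (forall x, 0 <= lam x) /\ lpn (t 0%nat) n lam <= 1 /\
    mixn s n F 1 0 j0 <= mixn (fun _ => Fin rho) n (fun j => prodR (fun _ => lam (j 0%nat)) 1 * F j) 1 0 j0.
Proof.
  intros hr ht hs e hF.
  destruct (lpn_reverse_holder rho (t 0%nat) (s 0%nat) n (fun x => F (setj j0 0 x)) hr ht hs e
              ltac:(intros; apply hF)) as [lam [h0 [h1 h2]]].
  exists lam. split; [auto|split; auto].
  rewrite !mixn_S. eapply Rle_trans; [apply h2|]. right. apply lpn_ext.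
  intros. cbn. rewrite Rmult_1_l; auto.
Qed.

Lemma prodR_extend (lamI : nat -> nat -> R) lamd d j :
  prodR (fun i => (if Nat.eqb i d then lamd else lamI i) (j i)) (S d) =
  prodR (fun i => lamI i (j i)) d * lamd (j d).
Proof.
  simpl. rewrite Nat.eqb_refl. f_equal. apply prodR_ext.
  intros i hi. destruct (Nat.eqb_spec i d); [lia|auto].
Qed.

(* Iterated converse Hölder: peel off the innermost coordinate [d], whose exponent [S'] satisfies
   [1/S' = 1/rho - 1/t d], and apply the induction hypothesis with [rho := S']. *)
Lemma mixn_le_weighted d : forall (rho : R) (t s : nat -> ext) n (F : (nat -> nat) -> R) j0,
  1 <= rho -> (forall i, (i < d)%nat -> ext_valid (t i)) ->
  (forall i, (i < d)%nat -> ext_valid (s i)) ->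
  (forall i, (1 <= i < d)%nat -> exists S, s i = Fin S) ->
  (forall i, (i < d)%nat -> inv (s i) = 1 / rho - sum_from (fun l => inv (t l)) i (d - i)) ->
  (forall j, 0 <= F j) ->
  exists lam : nat -> nat -> R, (forall i x, 0 <= lam i x) /\
    (forall i, (i < d)%nat -> lpn (t i) n (lam i) <= 1) /\
    mixn s n F d 0 j0 <=
    mixn (fun _ => Fin rho) n (fun j => prodR (fun i => lam i (j i)) d * F j) d 0 j0.
Proof.
  induction d as [|d IH]; intros rho t s n F j0 hr ht hs hfin hinv hF.
  { exists (fun _ _ => 0). split; [intros; lra|]. split; [intros; lia|]. simpl; lra. }
  destruct d as [|d'].
  { destruct (mixn_le_weighted_1 rho t s n F j0) as [lam0 [h0 [h1 h2]]]; auto; try lia.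
    { rewrite (hinv 0%nat) by lia. simpl. ring. }
    exists (fun _ => lam0). split; [auto|split]; auto.
    intros i hi. replace i with 0%nat by lia. auto. }
  set (d := S d') in *.
  destruct (hfin d ltac:(unfold d; lia)) as [S' hS'].
  assert (hS'1 : 1 <= S') by (pose proof (hs d ltac:(lia)) as h; rewrite hS' in h; exact h).
  assert (eS : 1 / S' = 1 / rho - inv (t d)).
  { pose proof (hinv d ltac:(lia)) as h. rewrite hS' in h.
    replace (S d - d)%nat with 1%nat in h by lia. simpl in h. lra. }
  assert (hrS : rho <= S') by (apply (ext_le_of_inv_le rho (Fin S')); simpl; auto;
                               pose proof (inv_ge0 (t d) (ht d ltac:(lia))); lra).
  set (F' := fun j' => lpn (Fin S') n (fun x => F (setj j' d x))).
  destruct (IH S' t s n F' j0 hS'1 ltac:(intros; apply ht; lia) ltac:(intros; apply hs; lia)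
             ltac:(intros; apply hfin; lia)) as [lamI [hI0 [hI1 hI2]]].
  { intros i hi. rewrite hinv by lia. replace (S d - i)%nat with (S (d - i)) by lia.
    rewrite sum_from_snoc. replace (i + (d - i))%nat with d by lia. rewrite eS. ring. }
  { intros; apply lpn_ge0. }
  set (P := fun j => prodR (fun i => lamI i (j i)) d).
  assert (hP : forall j, 0 <= P j) by (intros; apply prodR_ge0; intros; auto).
  set (G := fun j => P j * F j).
  assert (hG : forall j, 0 <= G j) by (intros; apply Rmult_le_pos; auto).
  set (b := fun x => mixn (fun _ => Fin rho) n G d 0 (setj j0 d x)).
  destruct (lpn_reverse_holder rho (t d) (Fin S') n b hr (ht d ltac:(lia)) ltac:(simpl; lra)
              ltac:(simpl; lra) ltac:(intros; apply mixn_ge0; auto)) as [lamd [hd0 [hd1 hd2]]].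
  exists (fun i => if Nat.eqb i d then lamd else lamI i). split; [|split].
  - intros i x. destruct (Nat.eqb i d); auto.
  - intros i hi. destruct (Nat.eqb_spec i d); [subst; auto | apply hI1; lia].
  - assert (hPd : forall j x, P (setj j d x) = P j).
    { intros j x. apply prodR_ext. intros i hi. unfold setj. destruct (Nat.eqb_spec i d); [lia|auto]. }
    assert (hlam : forall j, prodR (fun i => (if Nat.eqb i d then lamd else lamI i) (j i)) (S d) * F j
                             = lamd (j d) * G j).
    { intro j. rewrite prodR_extend. unfold G, P. ring. }
    rewrite (mixn_ext _ _ _ _ _ 0 j0 (fun j _ => hlam j)), mixn_const_S_first_weighted by auto.
    assert (eG : mixn (fun _ => Fin S') n (fun j => P j * F' j) d 0 j0 =
                 mixn (fun _ => Fin S') n G (S d) 0 j0).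
    { symmetry. apply mixn_S_last_weighted; simpl; auto; lra. }
    rewrite (mixn_S_last s n F d 0), Nat.add_0_l, hS'. fold F'.
    eapply Rle_trans; [apply hI2|]. unfold P in eG. rewrite eG.
    eapply Rle_trans; [|apply hd2]. apply mixn_const_S_first_le_exp; auto.
Qed.

Lemma Rsup_lub E : bound E -> (exists x, E x) -> is_lub E (Rsup E).
Proof.
  intros hb hne. apply (epsilon_spec (inhabits 0) (fun l => is_lub E l)).
  destruct (completeness E hb hne) as [l hl]. exists l; auto.
Qed.


Lemma Rinf_le (E1 E2 : R -> Prop) : (exists x, E1 x) -> (forall x, E1 x -> E2 x) ->
  (forall x, E2 x -> 0 < x) -> Rinf E2 <= Rinf E1.
Proof.
  intros [c hc] h12 hpos. unfold Rinf.
  assert (b2 : bound (fun x => E2 (- x))) by (exists 0; intros x hx; apply hpos in hx; lra).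
  assert (b1 : bound (fun x => E1 (- x))) by (exists 0; intros x hx; apply h12, hpos in hx; lra).
  assert (n1 : exists x, E1 (- x)) by (exists (- c); rewrite Ropp_involutive; auto).
  assert (n2 : exists x, E2 (- x)) by (exists (- c); rewrite Ropp_involutive; auto).
  destruct (Rsup_lub _ b1 n1) as [_ hleast]. destruct (Rsup_lub _ b2 n2) as [hub _].
  assert (Rsup (fun x => E1 (- x)) <= Rsup (fun x => E2 (- x))); [|lra].
  apply hleast. intros x hx. apply hub, h12, hx.
Qed.

Definition emb (b : bool) (c : R) : sc (Kof b) :=
  match b as b' return sc (Kof b') with true => c | false => (c, 0) end.

Lemma sabs_ge0 b (z : sc (Kof b)) : 0 <= sabs (Kof b) z.
Proof. destruct b; simpl. apply Rabs_pos. apply sqrt_pos. Qed.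

Lemma sabs_s0 b : sabs (Kof b) (s0 (Kof b)) = 0.
Proof.
  destruct b; simpl. apply Rabs_R0.
  unfold Cabs; simpl. match goal with |- sqrt ?E = _ => replace E with 0 by ring end. apply sqrt_0.
Qed.

Lemma sabs_eq0 b z : sabs (Kof b) z = 0 -> z = s0 (Kof b).
Proof.
  destruct b; simpl; intros h. apply Rabs_eq_0; auto.
  unfold Cabs in h. apply sqrt_eq_0 in h; [|nra]. destruct z as [x y]; simpl in *. f_equal; nra.
Qed.

Lemma sadd_s0 b z : sadd (Kof b) z (s0 (Kof b)) = z.
Proof. destruct b; simpl. ring. unfold Cadd; destruct z; simpl; f_equal; ring. Qed.

Lemma sadd_s1_opp b : sadd (Kof b) (s1 (Kof b)) (sopp (Kof b) (s1 (Kof b))) = s0 (Kof b).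
Proof. destruct b; simpl. ring. unfold Cadd, Copp; simpl. f_equal; ring. Qed.

Lemma sabs_opp_s1 b : sabs (Kof b) (sopp (Kof b) (s1 (Kof b))) = 1.
Proof.
  destruct b; simpl. rewrite Rabs_Ropp; apply Rabs_R1.
  unfold Cabs, Copp; simpl. match goal with |- sqrt ?E = _ => replace E with 1 by ring end. apply sqrt_1.
Qed.

Lemma sabs_emb b c : 0 <= c -> sabs (Kof b) (emb b c) = c.
Proof.
  intros; destruct b; simpl. apply Rabs_pos_eq; auto.
  unfold Cabs; simpl. match goal with |- sqrt ?E = _ => replace E with (c * c) by ring end.
  apply sqrt_square; auto.
Qed.

Lemma sabs_smul_emb b c z : 0 <= c ->
  sabs (Kof b) (smul (Kof b) (emb b c) z) = c * sabs (Kof b) z.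
Proof.
  intros; destruct b; simpl. rewrite Rabs_mult, Rabs_pos_eq; auto.
  unfold Cabs, Cmul. cbn [fst snd].
  replace ((c * fst z - 0 * snd z) ^ 2 + (c * snd z + 0 * fst z) ^ 2)
    with ((c * c) * (fst z ^ 2 + snd z ^ 2)) by ring.
  rewrite sqrt_mult_alt, sqrt_square; auto. nra.
Qed.

Section BanachSpace.
Variable b : bool.
Variable X : BanachSpace (Kof b).

Lemma vopp_unique x y : vadd X x y = vzero X -> y = vopp X x.
Proof.
  intros h. rewrite <- (vadd_0 X y), <- (vadd_opp X x), vadd_assoc, (vadd_comm X y x), h.
  rewrite vadd_comm. apply vadd_0.
Qed.

Lemma vnorm_zero : vnorm X (vzero X) = 0.
Proof. apply vnorm_eq0; auto. Qed.

Lemma vscal_s0 x : vscal X (s0 (Kof b)) x = vzero X.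
Proof. apply vnorm_eq0. rewrite vnorm_scal, sabs_s0; ring. Qed.

(* [0 = |x - x| <= |x| + |-x| = 2 |x|] *)
Lemma vnorm_ge0 x : 0 <= vnorm X x.
Proof.
  assert (e : vscal X (sopp (Kof b) (s1 (Kof b))) x = vopp X x).
  { apply vopp_unique. rewrite <- (vscal_1 X x) at 1.
    rewrite <- vscal_distr_s, sadd_s1_opp. apply vscal_s0. }
  pose proof (vnorm_tri X x (vopp X x)) as h.
  rewrite vadd_opp, vnorm_zero, <- e, vnorm_scal, sabs_opp_s1 in h. lra.
Qed.

Lemma dual_ball_zero : dual_ball X (fun _ => s0 (Kof b)).
Proof.
  split.
  - intros. destruct b; simpl. ring. unfold Cadd, Cmul; simpl. f_equal; ring.
  - intros; rewrite sabs_s0; apply vnorm_ge0.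
Qed.

Lemma dual_ball_vzero phi : dual_ball X phi -> phi (vzero X) = s0 (Kof b).
Proof.
  intros [_ h]. apply sabs_eq0, Rle_antisym; [|apply sabs_ge0].
  rewrite <- vnorm_zero. apply h.
Qed.

Lemma dual_ball_scal phi c u : dual_ball X phi -> 0 <= c ->
  sabs (Kof b) (phi (vscal X (emb b c) u)) = c * sabs (Kof b) (phi u).
Proof.
  intros hp hc. pose proof (proj1 hp (emb b c) u (vzero X)) as h. rewrite vadd_0 in h.
  rewrite h, dual_ball_vzero, sadd_s0 by auto. apply sabs_smul_emb; auto.
Qed.

Lemma wnorm_lub p n xs : ext_valid p ->
  is_lub (fun t => exists phi, dual_ball X phi /\ t = lpn p n (fun j => sabs (Kof b) (phi (xs j))))
         (wnorm X p n xs).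
Proof.
  intros hp. apply Rsup_lub.
  - exists (lpn p n (fun j => vnorm X (xs j))). intros t [phi [hphi ->]].
    apply lpn_le; auto. intros.
    rewrite !Rabs_pos_eq by (try apply sabs_ge0; apply vnorm_ge0). apply (proj2 hphi).
  - eexists. exists (fun _ => s0 (Kof b)). split; [apply dual_ball_zero | reflexivity].
Qed.

Lemma wnorm_ge0 p n xs : ext_valid p -> 0 <= wnorm X p n xs.
Proof.
  intros hp. destruct (wnorm_lub p n xs hp) as [hub _].
  eapply Rle_trans; [apply lpn_ge0|]. apply hub.
  exists (fun _ => s0 (Kof b)). split; [apply dual_ball_zero | reflexivity].
Qed.

(* Hölder applied to each functional [phi]: [|lam phi(x)|_p <= |lam|_t |phi(x)|_q]. *)
Lemma wnorm_scal_le p t q n xs lam :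
  ext_valid p -> ext_valid t -> ext_valid q -> inv p = inv t + inv q ->
  (forall j, 0 <= lam j) -> lpn t n lam <= 1 ->
  wnorm X p n (fun j => vscal X (emb b (lam j)) (xs j)) <= wnorm X q n xs.
Proof.
  intros hp ht hq e hl hl1.
  destruct (wnorm_lub p n (fun j => vscal X (emb b (lam j)) (xs j)) hp) as [_ hleast].
  destruct (wnorm_lub q n xs hq) as [hub _].
  apply hleast. intros x [phi [hphi ->]].
  rewrite (lpn_ext _ _ _ (fun j => lam j * sabs (Kof b) (phi (xs j))))
    by (intros; rewrite dual_ball_scal; auto).
  eapply Rle_trans; [apply (holder p t q); auto|].
  assert (lpn q n (fun j => sabs (Kof b) (phi (xs j))) <= wnorm X q n xs)
    by (apply hub; exists phi; split; auto).
  pose proof (lpn_ge0 t n lam). pose proof (lpn_ge0 q n (fun j => sabs (Kof b) (phi (xs j)))).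
  nra.
Qed.

End BanachSpace.

Section Multilinear.
Variable b : bool.
Variable m : nat.
Variable X : nat -> BanachSpace (Kof b).
Variable Y : BanachSpace (Kof b).
Variable T : (forall k, X k) -> Y.
Hypothesis hT : multilinear m X Y T.

Lemma multilinear_upd_vzero x k : (k < m)%nat -> T (upd x k (vzero (X k))) = vzero Y.
Proof.
  intros hk. pose proof (proj2 hT k x (s1 (Kof b)) (vzero (X k)) (vzero (X k)) hk) as h.
  rewrite vscal_1, vadd_0, vscal_1 in h. set (Z := T (upd x k (vzero (X k)))) in *.
  assert (e : vadd Y Z (vopp Y Z) = vadd Y (vadd Y Z Z) (vopp Y Z)) by (rewrite <- h; auto).
  rewrite <- vadd_assoc, vadd_opp, vadd_0 in e. auto.
Qed.

Lemma multilinear_norm_upd_vscal x k a u : (k < m)%nat ->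
  vnorm Y (T (upd x k (vscal (X k) a u))) = sabs (Kof b) a * vnorm Y (T (upd x k u)).
Proof.
  intros hk. pose proof (proj2 hT k x a u (vzero (X k)) hk) as h.
  rewrite vadd_0 in h. rewrite h, multilinear_upd_vzero, vadd_0 by auto. apply vnorm_scal.
Qed.

Lemma multilinear_norm_vscal (lam : nat -> R) (x : forall k, X k) : (forall k, 0 <= lam k) ->
  vnorm Y (T (fun k => vscal (X k) (emb b (lam k)) (x k))) = prodR lam m * vnorm Y (T x).
Proof.
  intros hl.
  set (z := fun i : nat => (fun k => if Nat.ltb k i then vscal (X k) (emb b (lam k)) (x k) else x k)
                           : forall k, X k).
  assert (Hi : forall i, (i <= m)%nat -> vnorm Y (T (z i)) = prodR lam i * vnorm Y (T x)).
  { induction i; intros hi.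
    - simpl. rewrite Rmult_1_l. reflexivity.
    - assert (e1 : T (z (S i)) = T (upd (z i) i (vscal (X i) (emb b (lam i)) (x i)))).
      { apply (proj1 hT). intros k hk. unfold upd. destruct (Nat.eq_dec i k) as [ei|ni].
        + subst k. simpl. unfold z. destruct (Nat.ltb_spec i (S i)); [auto|lia].
        + unfold z. destruct (Nat.ltb_spec k (S i)); destruct (Nat.ltb_spec k i); auto; lia. }
      assert (e2 : T (upd (z i) i (x i)) = T (z i)).
      { apply (proj1 hT). intros k hk. unfold upd. destruct (Nat.eq_dec i k) as [ei|ni].
        + subst k. simpl. unfold z. rewrite Nat.ltb_irrefl. auto.
        + auto. }
      rewrite e1, multilinear_norm_upd_vscal, e2, IHi, sabs_emb by (auto; lia). simpl. ring. }
  rewrite <- Hi by lia. f_equal. apply (proj1 hT). intros k hk. unfold z.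
  destruct (Nat.ltb_spec k m); [auto|lia].
Qed.

End Multilinear.

(** * Exponents *)

Definition holder_conj (p q : ext) : ext :=
  match p, q with
  | Fin a, Fin c => if Req_EM_T a c then Inf else Fin (a * c / (c - a))
  | Fin a, Inf => Fin a
  | Inf, _ => Inf
  end.

Lemma holder_conj_spec p q : ext_valid p -> ext_valid q -> ext_le p q ->
  ext_valid (holder_conj p q) /\ inv p = inv (holder_conj p q) + inv q.
Proof.
  destruct p as [a|]; destruct q as [c|]; simpl; intros hp hq hle; try tauto.
  - destruct (Req_EM_T a c). { subst; simpl; split; auto; ring. }
    simpl. assert (c - a > 0) by lra. split.
    + assert (a * c / (c - a) - 1 = (a * c - (c - a)) / (c - a)) by (field; lra).
      assert (0 <= (a * c - (c - a)) / (c - a))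
        by (apply Rmult_le_pos; [nra | left; apply Rinv_0_lt_compat; lra]).
      lra.
    + field. split; lra.
  - split; auto. ring.
  - split; auto. ring.
Qed.

Lemma sum_from_ext f g k c : (forall l, (k <= l < k + c)%nat -> f l = g l) ->
  sum_from f k c = sum_from g k c.
Proof.
  revert k; induction c; simpl; intros k hf; auto.
  rewrite hf, IHc by (intros; try apply hf; lia). auto.
Qed.

Lemma sum_from_plus f g k c : sum_from (fun l => f l + g l) k c = sum_from f k c + sum_from g k c.
Proof. revert k; induction c; simpl; intros. ring. rewrite IHc; ring. Qed.

Lemma sum_from_split f k a c : sum_from f k (a + c) = sum_from f k a + sum_from f (k + a) c.
Proof.
  revert k; induction a; simpl; intros. { rewrite Nat.add_0_r; ring. }
  rewrite IHa. replace (S k + a)%nat with (k + S a)%nat by lia. ring.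
Qed.

Lemma sum_from_ge0 f k c : (forall l, (k <= l < k + c)%nat -> 0 <= f l) -> 0 <= sum_from f k c.
Proof.
  revert k; induction c; simpl; intros k hf. lra.
  pose proof (hf k ltac:(lia)). pose proof (IHc (S k) ltac:(intros; apply hf; lia)). lra.
Qed.

Section Exponents.
Variables (m : nat) (r : R) (p q s : nat -> ext).
Hypothesis Hp : forall k, (k < m)%nat -> ext_valid (p k).
Hypothesis Hq : forall k, (k < m)%nat -> ext_valid (q k).
Hypothesis Hle : forall k, (k < m)%nat -> ext_le (p k) (q k).
Hypothesis Hs_def : forall k, (k < m)%nat -> inv (s k) - tail_inv m q k = 1 / r - tail_inv m p k.

Let t k := holder_conj (p k) (q k).

Lemma inv_s_tail k : (k < m)%nat ->
  inv (s k) = 1 / r - sum_from (fun l => inv (t l)) k (m - k).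
Proof.
  intros hk. pose proof (Hs_def k hk) as h. unfold tail_inv in h.
  rewrite (sum_from_ext (fun i => inv (p i)) (fun l => inv (t l) + inv (q l))), sum_from_plus in h.
  - lra.
  - intros l hl. apply holder_conj_spec; [apply Hp | apply Hq | apply Hle]; lia.
Qed.

(* [inv (s k)] is nondecreasing in [k], so [s k] is finite for [k >= 1] once [inv (s 0) + inv (t 0) > 0]. *)
Lemma inv_s_ge k : (k < m)%nat -> inv (s k) = inv (s 0%nat) + sum_from (fun l => inv (t l)) 0 k.
Proof.
  intros hk. rewrite !inv_s_tail by lia.
  replace (m - 0)%nat with (k + (m - k))%nat by lia. rewrite sum_from_split. simpl. ring.
Qed.

Lemma inv_holder_conj_ge0 l : (l < m)%nat -> 0 <= inv (t l).
Proof. intros. apply inv_ge0, holder_conj_spec; auto. Qed.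

End Exponents.

Lemma ext_lt_le p q : ext_lt p q -> ext_le p q.
Proof. destruct p; destruct q; simpl; auto; lra. Qed.

Lemma inv_lt p q : ext_valid p -> ext_valid q -> ext_lt p q -> inv q < inv p.
Proof.
  destruct p as [a|]; destruct q as [c|]; simpl; intros hp hq hlt; try tauto.
  - unfold Rdiv; rewrite !Rmult_1_l. apply Rinv_lt_contravar; nra.
  - apply one_div_pos; lra.
Qed.

Lemma s_Fin_tail m r p q s
  (Hp : forall k, (k < m)%nat -> ext_valid (p k))
  (Hq : forall k, (k < m)%nat -> ext_valid (q k))
  (Hcond :
     ((forall k, (k < m)%nat -> ext_le (p k) (q k)) /\
      1 / r - tail_inv m p 0 + tail_inv m q 0 > 0)
     \/
     ((forall k, (1 <= k < m)%nat -> ext_le (p k) (q k)) /\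
      ext_lt (p 0%nat) (q 0%nat) /\
      1 / r - tail_inv m p 0 + tail_inv m q 0 >= 0))
  (Hle : forall k, (k < m)%nat -> ext_le (p k) (q k))
  (Hs_def : forall k, (k < m)%nat -> inv (s k) - tail_inv m q k = 1 / r - tail_inv m p k) :
  forall i, (1 <= i < m)%nat -> exists S, s i = Fin S.
Proof.
  intros i hi. set (g := fun l => inv (holder_conj (p l) (q l))).
  assert (hg : forall l, (l < m)%nat -> 0 <= g l) by (intros; apply (inv_holder_conj_ge0 m); auto).
  assert (hs0 : inv (s 0%nat) = 1 / r - tail_inv m p 0 + tail_inv m q 0)
    by (pose proof (Hs_def 0%nat ltac:(lia)); lra).
  assert (hpos : 0 < inv (s i)).
  { rewrite (inv_s_ge m r p q s) by (auto; lia). fold g.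
    destruct i as [|i]; [lia|]. simpl. pose proof (sum_from_ge0 g 1 i ltac:(intros; apply hg; lia)).
    destruct Hcond as [[_ h] | [_ [hlt h]]].
    - pose proof (hg 0%nat ltac:(lia)). lra.
    - (* [p 0 < q 0] makes [inv (t 0)] positive *)
      assert (0 < g 0%nat).
      { destruct (holder_conj_spec (p 0%nat) (q 0%nat) (Hp 0%nat ltac:(lia)) (Hq 0%nat ltac:(lia))
                    (Hle 0%nat ltac:(lia))) as [_ e].
        pose proof (inv_lt _ _ (Hp 0%nat ltac:(lia)) (Hq 0%nat ltac:(lia)) hlt).
        unfold g. lra. }
      lra. }
  destruct (s i) as [S|]; [exists S; auto | simpl in hpos; lra].
Qed.

Lemma summing_ineq_transfer {b : bool} m (X : nat -> BanachSpace (Kof b)) (Y : BanachSpace (Kof b))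
  (T : (forall k, X k) -> Y) r p q t s C :
  1 <= r -> multilinear m X Y T ->
  (forall k, (k < m)%nat -> ext_valid (p k)) ->
  (forall k, (k < m)%nat -> ext_valid (q k)) ->
  (forall k, (k < m)%nat -> ext_valid (t k) /\ inv (p k) = inv (t k) + inv (q k)) ->
  (forall k, (k < m)%nat -> ext_valid (s k)) ->
  (forall i, (1 <= i < m)%nat -> exists S, s i = Fin S) ->
  (forall k, (k < m)%nat -> inv (s k) = 1 / r - sum_from (fun l => inv (t l)) k (m - k)) ->
  0 <= C -> summing_ineq m X Y (fun _ => Fin r) p T C -> summing_ineq m X Y s q T C.
Proof.
  intros hr hT hp hq ht hs hfin hinv hC hsum n xs.
  set (a := fun j : nat -> nat => vnorm Y (T (fun k => xs k (j k)))).
  destruct (mixn_le_weighted m r t s n a (fun _ => O) hr ltac:(intros; apply ht; auto) hs hfin hinv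
              ltac:(intros; apply vnorm_ge0)) as [lam [hl0 [hl1 hl2]]].
  set (ys := fun k j => vscal (X k) (emb b (lam k j)) (xs k j)).
  assert (e : (fun j => prodR (fun i => lam i (j i)) m * a j) =
              (fun j => vnorm Y (T (fun k => ys k (j k))))).
  { apply functional_extensionality; intro j. symmetry.
    apply (multilinear_norm_vscal b m X Y T hT (fun k => lam k (j k))); auto. }
  unfold mixed. eapply Rle_trans; [apply hl2|]. rewrite e.
  eapply Rle_trans; [apply (hsum n ys)|]. apply Rmult_le_compat_l; [lra|].
  apply prodR_le. intros k hk. destruct (ht k hk) as [htk e_pq]. split.
  - apply wnorm_ge0; auto.
  - apply (wnorm_scal_le b (X k) (p k) (t k) (q k)); auto.
Qed.

Theorem theorem3 (b : bool) (m : nat) (Hm : (1 <= m)%nat) (r : R) (Hr : 1 <= r)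
  (p q s : nat -> ext)
  (Hp : forall k, (k < m)%nat -> ext_valid (p k))
  (Hq : forall k, (k < m)%nat -> ext_valid (q k))
  (Hcond :
     ((forall k, (k < m)%nat -> ext_le (p k) (q k)) /\
      1 / r - tail_inv m p 0 + tail_inv m q 0 > 0)
     \/
     ((forall k, (1 <= k < m)%nat -> ext_le (p k) (q k)) /\
      ext_lt (p 0%nat) (q 0%nat) /\
      1 / r - tail_inv m p 0 + tail_inv m q 0 >= 0))
  (Hs_def : forall k, (k < m)%nat ->
     inv (s k) - tail_inv m q k = 1 / r - tail_inv m p k)
  (Hs : forall k, (k < m)%nat -> ext_valid (s k))
  (X : nat -> BanachSpace (Kof b)) (Y : BanachSpace (Kof b))
  (T : (forall k, X k) -> Y) :
  is_summing m X Y (fun _ => Fin r) p T ->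
  is_summing m X Y s q T /\
  pi_norm m X Y s q T <= pi_norm m X Y (fun _ => Fin r) p T.
Proof.
  intros [hml [hcont [C [hC hsum]]]].
  assert (hle : forall k, (k < m)%nat -> ext_le (p k) (q k)).
  { intros [|k] hk; destruct Hcond as [[h _] | [h [h0 _]]];
      auto using ext_lt_le; apply h; lia. }
  assert (transfer : forall C', 0 < C' -> summing_ineq m X Y (fun _ => Fin r) p T C' ->
                                 summing_ineq m X Y s q T C').
  { intros C' hC'. apply (summing_ineq_transfer m X Y T r p q (fun k => holder_conj (p k) (q k)));
      auto using Rlt_le.
    - intros; apply holder_conj_spec; auto.
    - apply (s_Fin_tail m r p q s); auto.
    - apply inv_s_tail; auto. }
  split.
  - split; [|split]; auto. exists C; auto.
  - apply Rinf_le; [exists C; auto | intros x [h1 h2]; auto | intros x [h1 _]; auto].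
Qed.
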